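(* Let $\varphi$ be a Boolean formula in 3-CNF and let $G$ be the graph constructed from $\varphi$ as described in the context. Let $X\subseteq V(G)$ be a minimum cluster deletion set of $G$. Then, for every variable gadget of $G$ (i.e., every $j\in\{1,\dots,n\}$), $X$ contains all vertices of one of the two sides $T_{1,j},T_{2,j}$.
   Context: Let $\varphi$ consist of clauses $C_1,\dots,C_m$ over variables $x_1,\dots,x_n$, each clause containing exactly three literals, $C_i=(L_i^1\vee L_i^2\vee L_i^3)$. The graph $G$ has vertex set $\{u_{r,s,i}: r\in\{1,2,3\}, s\in\{1,\dots,7\}, i\in\{1,\dots,m\}\}\cup\{v_{r,s,j}: r\in\{1,2\}, s\in\{1,2,3\}, j\in\{1,\dots,n\}\}$ and edge set consisting of: $\{u_{r,s,i},u_{r',s',i}\}$ for all $r\ne r'$ in $\{1,2,3\}$, all $s,s'\in\{1,\dots,7\}$, all $i$; $\{v_{1,s,j},v_{2,s',j}\}$ for all $s,s'\in\{1,2,3\}$, all $j$; $\{u_{r,s,i},v_{1,s',j}\}$ for all $s\in\{1,\dots,7\}$, $s'\in\{1,2,3\}$ whenever $L_i^r = x_j$; and $\{u_{r,s,i},v_{2,s',j}\}$ for all $s\in\{1,\dots,7\}$, $s'\in\{1,2,3\}$ whenever $L_i^r=\neg x_j$. The clause gadget of $C_i$ has sides $S_{r,i}=\{u_{r,s,i}: s\in\{1,\dots,7\}\}$, $r=1,2,3$; the variable gadget of $x_j$ is the complete bipartite graph on $\{v_{r,s,j}\}$ with sides $T_{r,j}=\{v_{r,s,j}: s\in\{1,2,3\}\}$,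 $r=1,2$. A cluster deletion set of $G$ is a set $X\subseteq V(G)$ such that $G-X$ contains no induced path on three vertices; it is minimum if it has the smallest possible size. *)

From mathcomp Require Import all_boot.
Set Implicit Arguments. Unset Strict Implicit. Unset Printing Implicit Defensive.

(* A literal over variables x_0..x_{n-1}: (variable index, polarity);
   polarity true = positive literal x_j, false = negative literal ~x_j. *)
Definition literal (n : nat) := ('I_n * bool)%type.

(* A 3-CNF formula with m clauses over n variables: clause i has literals
   phi i 0, phi i 1, phi i 2 (the paper's L_i^1, L_i^2, L_i^3). *)
Definition cnf3 (n m : nat) := 'I_m -> 'I_3 -> literal n.

(* Vertices: inl (r,s,i) = u_{r,s,i}, inr (r,s,j) = v_{r,s,j}  (0-based). *)
Definition vert (n m : nat) :=
  (('I_3 * 'I_7 * 'I_m) + ('I_2 * 'I_3 * 'I_n))%type.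

(* u_{r,s,i} ~ v_{r',s',j} iff literal L_i^r is on x_j and
   r' = side 1 (index 0) for a positive literal, side 2 (index 1) for negative. *)
Definition uv_adj n m (phi : cnf3 n m) (r : 'I_3) (i : 'I_m) (r' : 'I_2) (j : 'I_n) : bool :=
  ((phi i r).1 == j) && (nat_of_ord r' == (if (phi i r).2 then 0 else 1)).

Definition gadj n m (phi : cnf3 n m) (x y : vert n m) : bool :=
  match x, y with
  | inl (r, _, i), inl (r', _, i') => (i == i') && (r != r')
  | inr (r, _, j), inr (r', _, j') => (j == j') && (r != r')
  | inl (r, _, i), inr (r', _, j) => uv_adj phi r i r' j
  | inr (r', _, j), inl (r, _, i) => uv_adj phi r i r' j
  end.

Definition cluster_deletion_set n m (phi : cnf3 n m) (X : {set vert n m}) : Prop :=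
  forall x y z : vert n m,
    x \notin X -> y \notin X -> z \notin X ->
    x != z -> gadj phi x y -> gadj phi y z -> gadj phi x z.

Definition min_cluster_deletion_set n m (phi : cnf3 n m) (X : {set vert n m}) : Prop :=
  cluster_deletion_set phi X /\
  forall Y : {set vert n m}, cluster_deletion_set phi Y -> #|X| <= #|Y|.

Definition side n m (r : 'I_2) (j : 'I_n) : {set vert n m} :=
  [set x : vert n m | if x is inr (r', _, j') then (r' == r) && (j' == j) else false].

(* Suppose a minimum cluster deletion set X leaves a vertex a of T_{1,j} and a
   vertex b of T_{2,j}. Each side is independent and completely joined to the
   other, so G - X keeps at most one vertex of each side, i.e. X contains at
   least two vertices of T_{2,j}. A surviving vertex w outside the gadget
   adjacent to T_{2,j} would, to avoid the path w - b - a, also be adjacent to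
   T_{1,j}, which no vertex outside the gadget is. Hence deleting all of
   T_{1,j} and none of T_{2,j} is again a cluster deletion set (T_{2,j}
   becomes isolated), and it is strictly smaller than X. *)

From mathcomp Require Import all_boot.
From mathcomp Require Import zify.

Set Implicit Arguments. Unset Strict Implicit.

Section ClusterDeletion.

Variables (T : finType) (e : rel T).
Hypothesis e_sym : symmetric e.

Definition cluster_deletion (X : {set T}) : Prop :=
  forall x y z, x \notin X -> y \notin X -> z \notin X ->
    x != z -> e x y -> e y z -> e x z.

Lemma cluster_deletion_indep_le1 (X S : {set T}) c :
  cluster_deletion X -> {in S &, forall x y, ~~ e x y} ->
  {in S, forall x, e c x} -> c \notin X -> #|S :\: X| <= 1.
Proof.
move=> HX indepS adjS cX; rewrite leqNgt; apply/negP.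
case/card_gt1P=> x [y [/setDP[xS xX] /setDP[yS yX] xy]].
have := HX x c y xX cX yX xy; rewrite e_sym adjS // adjS // => /(_ isT isT).
by apply/negP/indepS.
Qed.

Lemma cluster_deletion_isolate (X Y : {set T}) :
  cluster_deletion X ->
  (forall v w, v \notin Y -> w \notin Y -> v \in X -> ~~ e v w) ->
  cluster_deletion Y.
Proof.
move=> HX isolated x y z xY yY zY xz xy yz.
have notX v w : v \notin Y -> w \notin Y -> e v w -> v \notin X.
  by move=> vY wY vw; apply/negP => vX; rewrite (negbTE (isolated v w _ _ _)) in vw.
have yx : e y x by rewrite e_sym.
have zy : e z y by rewrite e_sym.
exact: HX (notX _ _ xY yY xy) (notX _ _ yY xY yx) (notX _ _ zY yY zy) xz xy yz.
Qed.

End ClusterDeletion.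

Lemma card_exchange_lt (T : finType) (X A B : {set T}) :
  #|B :\: X| < #|X :&: A| -> #|(X :\: A) :|: (B :\: X)| < #|X|.
Proof.
have := (leq_card_setU (X :\: A) (B :\: X)).1; have := cardsID A X; lia.
Qed.

Lemma ord2_eq_of_neq (a b c : 'I_2) : a != b -> a != c -> b = c.
Proof.
rewrite -!(inj_eq val_inj); case: a b c => [a ?] [b ?] [c ?] /= ab ac.
by apply/val_inj => /=; lia.
Qed.

Section VariableGadget.

Variables (n m : nat) (phi : cnf3 n m).

Lemma gadj_sym : symmetric (gadj phi).
Proof.
case=> [[[r s] i]|[[r s] i]] [[[r' s'] i']|[[r' s'] i']] //=;
by rewrite eq_sym [r' == r]eq_sym.
Qed.

Lemma sideP (r : 'I_2) (j : 'I_n) (x : vert n m) :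
  reflect (exists s, x = inr (r, s, j)) (x \in side m r j).
Proof.
rewrite inE; case: x => [[[r' s] j']|[[r' s] j']]; first by right=> -[].
apply: (iffP andP) => [[/eqP-> /eqP->]|[_ [-> _ ->]]]; last by [].
by exists s.
Qed.

Lemma card_side (r : 'I_2) (j : 'I_n) : #|side m r j| = 3.
Proof.
have -> : side m r j = [set inr (r, s, j) | s : 'I_3].
  by apply/setP=> x; apply/sideP/imsetP => [[s ->]|[s _ ->]]; exists s.
by rewrite card_imset ?card_ord // => s s' [].
Qed.

Lemma gadj_side (r r' : 'I_2) (j : 'I_n) a b :
  a \in side m r j -> b \in side m r' j -> gadj phi a b = (r != r').
Proof. by case/sideP=> s ->; case/sideP=> s' ->; rewrite /= eqxx. Qed.

Lemma gadj_side_eq (r : 'I_2) (j : 'I_n) a b :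
  a \in side m r j -> b \in side m r j -> gadj phi a =1 gadj phi b.
Proof. by case/sideP=> s ->; case/sideP=> s' -> [[[? ?] ?]|[[? ?] ?]]. Qed.

(* A clause vertex only sees the side of its literal's polarity, and a vertex
   of another variable gadget sees no side of x_j. *)
Lemma not_adj_both_sides (r r' : 'I_2) (j : 'I_n) w a b :
  r != r' -> w \notin side m r j -> w \notin side m r' j ->
  a \in side m r j -> b \in side m r' j -> gadj phi w a -> ~~ gadj phi w b.
Proof.
move=> rr' + + /sideP[s ->] /sideP[s' ->].
case: w => [[[r0 s0] i]|[[r0 s0] j0]]; rewrite !inE /=.
  rewrite /uv_adj => _ _ /andP[_ /eqP ra]; apply/negP => /andP[_ /eqP rb].
  by move: rr'; rewrite -(inj_eq val_inj) /= ra rb eqxx.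
case: (j0 =P j) => //= _; rewrite !andbT => r0r r0r' _.
by rewrite (ord2_eq_of_neq r0r r0r') eqxx in rr'.
Qed.

Lemma side_survivors_le1 (X : {set vert n m}) (r r' : 'I_2) (j : 'I_n) c :
  cluster_deletion_set phi X -> r != r' -> c \in side m r' j -> c \notin X ->
  #|side m r j :\: X| <= 1.
Proof.
move=> HX rr' cT; apply: (cluster_deletion_indep_le1 gadj_sym HX).
- by move=> x y xT yT; rewrite (gadj_side xT yT) eqxx.
- by move=> x xT; rewrite (gadj_side cT xT) eq_sym.
Qed.

Lemma flip_variable_gadget (X : {set vert n m}) (r r' : 'I_2) (j : 'I_n) a b :
  cluster_deletion_set phi X -> r != r' ->
  a \in side m r j -> a \notin X -> b \in side m r' j -> b \notin X ->
  cluster_deletion_set phi ((X :\: side m r' j) :|: (side m r j :\: X)).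
Proof.
move=> HX rr' aT aX bT' bX.
apply: (cluster_deletion_isolate gadj_sym HX) => v w vY wY vX.
have vT' : v \in side m r' j.
  by move: vY; rewrite in_setU !in_setD vX andbT; case/norP=> /negPn.
have [wT'|wT'] := boolP (w \in side m r' j).
  by rewrite (gadj_side vT' wT') eqxx.
move: wY; rewrite in_setU !in_setD wT' /= => /norP[wX]; rewrite wX /= => wT.
rewrite (gadj_side_eq vT' bT') gadj_sym.
apply/negP=> wb; have wa : gadj phi w a.
  apply: HX wb _ => //; first by apply: contraNneq wT => ->.
  by rewrite (gadj_side bT' aT) eq_sym.
by rewrite (negbTE (not_adj_both_sides rr' wT wT' aT bT' wa)) in wb.
Qed.

End VariableGadget.

Theorem lemma11 (n m : nat) (phi : cnf3 n m) (X : {set vert n m}) :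
  min_cluster_deletion_set phi X ->
  forall j : 'I_n, exists r : 'I_2, side m r j \subset X.
Proof.
move=> [HX Xmin] j.
have [/existsP //|/existsPn outside] := boolP [exists r, side m r j \subset X].
pose r0 : 'I_2 := ord0; pose r1 : 'I_2 := ord_max.
have [r01 r10] : r0 != r1 /\ r1 != r0 by [].
have [a aT aX] := subsetPn (outside r0); have [b bT bX] := subsetPn (outside r1).
have lt_removed : #|side m r0 j :\: X| < #|X :&: side m r1 j|.
  have := cardsID X (side m r1 j); rewrite setIC card_side.
  have := side_survivors_le1 HX r01 bT bX.
  have := side_survivors_le1 HX r10 aT aX; lia.
have := Xmin _ (flip_variable_gadget HX r01 aT aX bT bX).
by rewrite leqNgt card_exchange_lt.
Qed.
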